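(* Let $(A,W)$ be a $T_1$ Pratt comonoid such that $W$ is closed under complementation (i.e., $x\in W$ implies $A-x\in W$). Then $(A,W)$ is discrete, i.e., $W$ is the set of all subsets of $A$.
   Context: A Pratt comonoid is a pair $(A,W)$ where $A$ is a set and $W$ is a set of subsets of $A$ such that (i) $\emptyset\in W$ and $A\in W$; (ii) whenever $C\subseteq A\times A$ is such that for every $a\in A$ both the $a$-th row $\{b\mid (a,b)\in C\}$ and the $a$-th column $\{b\mid (b,a)\in C\}$ belong to $W$ (such a $C$ is called a crossword over $W$), the diagonal $\{b\mid (b,b)\in C\}$ also belongs to $W$. $(A,W)$ is called $T_1$ if for all distinct $a,b\in A$ there is an element of $W$ containing $a$ but not $b$. It is called discrete if $W$ is the full power set of $A$. *)

Definition crossword {A : Type} (W : (A -> Prop) -> Prop) (C : A -> A -> Prop) : Prop :=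
  forall a : A, W (fun b => C a b) /\ W (fun b => C b a).

Definition pratt_comonoid (A : Type) (W : (A -> Prop) -> Prop) : Prop :=
  W (fun _ => False) /\ W (fun _ => True) /\
  (forall C : A -> A -> Prop, crossword W C -> W (fun b => C b b)).

Definition T1 {A : Type} (W : (A -> Prop) -> Prop) : Prop :=
  forall a b : A, a <> b -> exists x, W x /\ x a /\ ~ x b.

Definition closed_under_complement {A : Type} (W : (A -> Prop) -> Prop) : Prop :=
  forall x, W x -> W (fun a => ~ x a).

Definition discrete {A : Type} (W : (A -> Prop) -> Prop) : Prop :=
  forall x : A -> Prop, W x.

(* Intersections U ∩ V and disjoint unions of members of W are diagonals of
   crosswords over W, so W is closed under them; hence every set is in W
   as soon as every singleton is.

   For a singleton {p}, peel A transfinitely: from a stage Y remove a member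
   of W that misses p but meets Y \ {p} (it exists by T1).  The stages form a
   tower, well ordered by reverse inclusion, whose bottom is {p}.  Every stage
   lies in W: its complement is the disjoint union of the layers U \ next U of
   the stages U strictly above it, and each layer is U minus a member of W. *)

From Stdlib Require Import Classical ClassicalEpsilon FunctionalExtensionality PropExtensionality.

Definition subset {A : Type} (U V : A -> Prop) : Prop := forall a, U a -> V a.

Definition meet {A : Type} (F : (A -> Prop) -> Prop) : A -> Prop :=
  fun a => forall Y, F Y -> Y a.

Lemma subset_refl {A : Type} (U : A -> Prop) : subset U U.
Proof. intros a Ha; exact Ha. Qed.

Lemma subset_antisym {A : Type} (U V : A -> Prop) : subset U V -> subset V U -> U = V.
Proof.
  intros HUV HVU. apply functional_extensionality; intro a.
  apply propositional_extensionality; split; [apply HUV | apply HVU].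
Qed.

Lemma not_subset {A : Type} (U V : A -> Prop) : ~ subset U V -> exists a, U a /\ ~ V a.
Proof.
  intro HUV. apply not_all_ex_not in HUV as [a Ha].
  exists a. apply imply_to_and, Ha.
Qed.

Lemma not_meet {A : Type} (F : (A -> Prop) -> Prop) b :
  ~ meet F b -> exists Y, F Y /\ ~ Y b.
Proof.
  intro Hb. apply not_all_ex_not in Hb as [Y HY].
  exists Y. apply imply_to_and, HY.
Qed.

Section Tower.

Variables (A : Type) (next : (A -> Prop) -> A -> Prop).
Hypothesis next_subset : forall Y, subset (next Y) Y.

Inductive tower : (A -> Prop) -> Prop :=
| tower_next Y : tower Y -> tower (next Y)
| tower_meet F : (forall Y, F Y -> tower Y) -> tower (meet F).

(* The extreme points of Lang's proof of the Bourbaki-Witt theorem, for the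
   reverse inclusion order. *)
Definition extreme (c : A -> Prop) : Prop :=
  forall x, tower x -> subset c x -> ~ subset x c -> subset c (next x).

Lemma extreme_comparable c x : extreme c -> tower x -> subset c x \/ subset x (next c).
Proof.
  intros Ec Tx. induction Tx as [y Ty IH | F HF IH].
  - destruct IH as [Hcy | Hyc].
    + destruct (classic (subset y c)) as [Hyc | Hyc].
      * rewrite (subset_antisym _ _ Hcy Hyc). right. apply subset_refl.
      * left. exact (Ec y Ty Hcy Hyc).
    + right. intros a Ha. apply Hyc, next_subset, Ha.
  - destruct (classic (exists Y, F Y /\ subset Y (next c))) as [[Y [FY HY]] | Hno].
    + right. intros a Ha. apply HY, Ha, FY.
    + left. intros a Ha Y FY. destruct (IH Y FY) as [HcY | HYc].
      * apply HcY, Ha.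
      * exfalso. apply Hno. exists Y. split; assumption.
Qed.

Lemma tower_extreme c : tower c -> extreme c.
Proof.
  intro Tc. induction Tc as [d Td IH | F HF IH]; intros x Tx Hcx Hxc.
  - destruct (extreme_comparable d x IH Tx) as [Hdx | Hxd]; [| contradiction].
    destruct (classic (subset x d)) as [Hxd | Hxd].
    + rewrite (subset_antisym _ _ Hdx Hxd). apply subset_refl.
    + intros a Ha. apply (IH x Tx Hdx Hxd), next_subset, Ha.
  - destruct (not_subset _ _ Hxc) as [b [xb Hb]].
    destruct (not_meet F b Hb) as [Y [FY Yb]].
    destruct (extreme_comparable Y x (IH Y FY) Tx) as [HYx | HxY].
    + intros a Ha. apply (IH Y FY x Tx HYx).
      * intro HxY. exact (Yb (HxY b xb)).
      * apply Ha, FY.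
    + exfalso. exact (Yb (next_subset Y b (HxY b xb))).
Qed.

Lemma tower_total c x : tower c -> tower x -> subset c x \/ subset x (next c).
Proof. intros Tc Tx. exact (extreme_comparable c x (tower_extreme c Tc) Tx). Qed.

Lemma subset_of_not_subset_next y U :
  tower y -> tower U -> ~ subset U (next y) -> subset y U.
Proof.
  intros Ty TU HU. destruct (tower_total y U Ty TU) as [H | H]; [exact H | contradiction].
Qed.

Lemma meet_subset_of_not_subset F U :
  (forall Y, F Y -> tower Y) -> tower U -> ~ subset U (meet F) ->
  exists Y, F Y /\ subset Y U.
Proof.
  intros HF TU HU. destruct (not_subset _ _ HU) as [b [Ub Hb]].
  destruct (not_meet F b Hb) as [Y [FY Yb]].
  exists Y. split; [exact FY |].
  destruct (tower_total U Y TU (HF Y FY)) as [HUY | HYU].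
  - exfalso. exact (Yb (HUY b Ub)).
  - intros a Ha. apply next_subset, HYU, Ha.
Qed.

Lemma stable_subset_tower U X : tower U -> subset U (next U) -> tower X -> subset U X.
Proof.
  intros TU HU TX. induction TX as [y Ty IH | F HF IH].
  - destruct (tower_total y U Ty TU) as [HyU | HUy]; [| exact HUy].
    rewrite (subset_antisym _ _ HyU IH). exact HU.
  - intros a Ua Y FY. exact (IH Y FY a Ua).
Qed.

Definition layer (U : A -> Prop) : A -> Prop := fun b => U b /\ ~ next U b.

Lemma layer_unique U V a : tower U -> tower V -> layer U a -> layer V a -> U = V.
Proof.
  intros TU TV [Ua nUa] [Va nVa]. apply subset_antisym.
  - destruct (tower_total U V TU TV) as [H | H]; [exact H |].
    exfalso. exact (nUa (H a Va)).
  - destruct (tower_total V U TV TU) as [H | H]; [exact H |].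
    exfalso. exact (nVa (H a Ua)).
Qed.

Lemma not_in_tower_iff_layer I a :
  tower I -> (~ I a <-> exists U, tower U /\ ~ subset U I /\ layer U a).
Proof.
  intro TI. split.
  - intro Ia.
    set (U := meet (fun V => tower V /\ V a)).
    assert (TU : tower U) by (apply tower_meet; intros V [TV _]; exact TV).
    assert (Ua : U a) by (intros V [_ Va]; exact Va).
    exists U. split; [exact TU |]. split.
    + intro HUI. exact (Ia (HUI a Ua)).
    + split; [exact Ua |]. intro nUa.
      assert (HU : subset U (next U)) by (intros b Ub; apply Ub; split; [constructor |]; assumption).
      exact (Ia (stable_subset_tower U I TU HU TI a Ua)).
  - intros [U [TU [HUI [Ua nUa]]]] Ia.
    destruct (tower_total U I TU TI) as [H | H].
    + exact (HUI H).
    + exact (nUa (H a Ia)).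
Qed.

End Tower.

Arguments tower {A} next _.
Arguments layer {A} next U _.

Section PrattComonoid.

Variables (A : Type) (W : (A -> Prop) -> Prop).
Hypothesis HP : pratt_comonoid A W.

Lemma W_ext X Y : W X -> (forall a, X a <-> Y a) -> W Y.
Proof.
  intros WX HXY. replace Y with X; [exact WX |].
  apply subset_antisym; intro a; apply HXY.
Qed.

Lemma W_empty : W (fun _ => False).
Proof. exact (proj1 HP). Qed.

Lemma W_guard (P : Prop) X : W X -> W (fun b => P /\ X b).
Proof.
  intro WX. destruct (classic P) as [p | np].
  - apply (W_ext X); [exact WX |]. tauto.
  - apply (W_ext (fun _ => False)); [exact W_empty |]. tauto.
Qed.

Lemma W_diagonal C : crossword W C -> W (fun b => C b b).
Proof. apply (proj2 (proj2 HP)). Qed.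

Lemma W_inter U V : W U -> W V -> W (fun a => U a /\ V a).
Proof.
  intros WU WV. apply (W_diagonal (fun a b => U a /\ V b)). intro a. split.
  - apply W_guard, WV.
  - apply (W_ext (fun b => V a /\ U b)); [apply W_guard, WU | tauto].
Qed.

Lemma W_disjoint_union (F : (A -> Prop) -> Prop) :
  (forall X, F X -> W X) ->
  (forall X Y a, F X -> F Y -> X a -> Y a -> X = Y) ->
  W (fun a => exists X, F X /\ X a).
Proof.
  intros WF disjF.
  set (C := fun a b => exists X, F X /\ X a /\ X b).
  assert (Hrow : forall a, W (fun b => C a b)).
  { intro a. destruct (classic (exists X, F X /\ X a)) as [[X [FX Xa]] | Hno].
    - apply (W_ext X); [exact (WF X FX) |]. intro b. split.
      + intro Xb. exists X. auto.
      + intros [Y [FY [Ya Yb]]]. rewrite (disjF X Y a FX FY Xa Ya). exact Yb.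
    - apply (W_ext (fun _ => False)); [exact W_empty |]. intro b. split; [tauto |].
      intros [X [FX [Xa _]]]. apply Hno. exists X. auto. }
  apply (W_ext (fun b => C b b)).
  - apply W_diagonal. intro a. split; [apply Hrow |].
    apply (W_ext (fun b => C a b)); [apply Hrow |].
    intro b. split; intros [X [FX [H1 H2]]]; exists X; auto.
  - intro a. split; intros [X [FX HX]]; exists X; intuition.
Qed.

Section Singleton.

Hypothesis HT : T1 W.
Hypothesis HC : closed_under_complement W.

Variable p : A.

Definition separates (Y s : A -> Prop) : Prop :=
  W s /\ ~ s p /\ ((exists a, Y a /\ a <> p) -> exists a, Y a /\ s a).

Definition separator (Y : A -> Prop) : A -> Prop :=
  epsilon (inhabits (fun _ : A => False)) (separates Y).

Lemma separator_spec Y : separates Y (separator Y).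
Proof.
  unfold separator. apply epsilon_spec.
  destruct (classic (exists a, Y a /\ a <> p)) as [[a [Ya Hap]] | Hno].
  - destruct (HT a p Hap) as [s [Ws [sa sp]]].
    exists s. split; [exact Ws |]. split; [exact sp |]. intros _. exists a. auto.
  - exists (fun _ => False). split; [exact W_empty |]. split; [auto |]. contradiction.
Qed.

Definition peel (Y : A -> Prop) : A -> Prop := fun b => Y b /\ ~ separator Y b.

Lemma peel_subset Y : subset (peel Y) Y.
Proof. intros a [Ya _]. exact Ya. Qed.

Lemma tower_peel_p Y : tower peel Y -> Y p.
Proof.
  intro TY. induction TY as [y Ty IH | F HF IH].
  - split; [exact IH |]. apply separator_spec.
  - intros Y FY. exact (IH Y FY).
Qed.

Lemma peel_stable_singleton U a : subset U (peel U) -> U a -> a = p.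
Proof.
  intros HU Ua. apply NNPP. intro Hap.
  destruct (separator_spec U) as [_ [_ Hmeet]].
  destruct (Hmeet (ex_intro _ a (conj Ua Hap))) as [b [Ub sb]].
  exact (proj2 (HU b Ub) sb).
Qed.

Lemma W_layer U : W U -> W (layer peel U).
Proof.
  intro WU. apply (W_ext (fun b => U b /\ separator U b)).
  - apply W_inter; [exact WU | apply separator_spec].
  - intro b. unfold layer, peel. split; [tauto |].
    intros [Ub nb]. split; [exact Ub |]. apply NNPP. tauto.
Qed.

(* The complement of a stage I is the disjoint union of the layers above I. *)
Lemma W_tower_of_above I :
  tower peel I -> (forall U, tower peel U -> ~ subset U I -> W U) -> W I.
Proof.
  intros TI Habove.
  set (F := fun X => exists U, tower peel U /\ ~ subset U I /\ X = layer peel U).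
  assert (WF : W (fun a => exists X, F X /\ X a)).
  { apply W_disjoint_union.
    - intros X [U [TU [HU ->]]]. apply W_layer, Habove; assumption.
    - intros X Y a [U [TU [_ ->]]] [V [TV [_ ->]]] HUa HVa.
      rewrite (layer_unique A peel peel_subset U V a TU TV HUa HVa). reflexivity. }
  apply (W_ext (fun a => ~ (exists X, F X /\ X a))); [exact (HC _ WF) |].
  intro a. pose proof (not_in_tower_iff_layer A peel peel_subset I a TI) as Hlayer.
  split.
  - intro Hno. apply NNPP. intro Ia. apply Hno.
    destruct (proj1 Hlayer Ia) as [U [TU [HU La]]].
    exists (layer peel U). split; [exists U; auto | exact La].
  - intros Ia [X [[U [TU [HU ->]]] La]].
    apply (proj2 Hlayer); [exists U; auto | exact Ia].
Qed.

(* Stated for all stages above Y so that, at a meet, the induction hypothesis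
   reaches the stages strictly above it. *)
Lemma W_tower_above Y : tower peel Y -> forall Z, tower peel Z -> subset Y Z -> W Z.
Proof.
  assert (Hstep : forall I, tower peel I ->
            (forall U, tower peel U -> ~ subset U I -> W U) ->
            forall Z, tower peel Z -> subset I Z -> W Z).
  { intros I TI Habove Z TZ HIZ. destruct (classic (subset Z I)) as [HZI | HZI].
    - rewrite (subset_antisym _ _ HZI HIZ). apply W_tower_of_above; assumption.
    - exact (Habove Z TZ HZI). }
  intro TY. induction TY as [y Ty IH | F HF IH]; apply Hstep; try (constructor; assumption).
  - intros U TU HU. exact (IH U TU (subset_of_not_subset_next A peel peel_subset y U Ty TU HU)).
  - intros U TU HU.
    destruct (meet_subset_of_not_subset A peel peel_subset F U HF TU HU) as [Y [FY HYU]].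
    exact (IH Y FY U TU HYU).
Qed.

Lemma W_singleton : W (fun b => b = p).
Proof.
  set (M := meet (tower peel)).
  assert (TM : tower peel M) by (apply tower_meet; auto).
  apply (W_ext M); [exact (W_tower_above M TM M TM (subset_refl M)) |].
  intro b. split.
  - apply peel_stable_singleton. intros a Ma. apply Ma. constructor. exact TM.
  - intros -> Y TY. exact (tower_peel_p Y TY).
Qed.

End Singleton.

End PrattComonoid.

Theorem theorem4p4 (A : Type) (W : (A -> Prop) -> Prop)
  (HP : pratt_comonoid A W) (HT : T1 W) (HC : closed_under_complement W) :
  discrete W.
Proof.
  intro x.
  set (F := fun X => exists a, x a /\ X = (fun b => b = a)).
  apply (W_ext A W (fun a => exists X, F X /\ X a)).
  - apply (W_disjoint_union A W HP).
    + intros X [a [_ ->]]. exact (W_singleton A W HP HT HC a).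
    + intros X Y c [a [_ ->]] [d [_ ->]] -> ->. reflexivity.
  - intro a. split.
    + intros [X [[c [xc ->]] ->]]. exact xc.
    + intro xa. exists (fun b => b = a). split; [exists a; auto | reflexivity].
Qed.
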